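(* Let $i,j\in\mathbb{N}$ and $n\in\mathbb{N}_0$. If $d_j(n+1)=d_i(n)\pm1$, then $d_j(n+1)+d_i(n)=d_\ell(2n+1)$ for some $\ell\in\{3,i+1,j+1\}$.
   Context: For $i\in\mathbb{N}$ and $n\in\mathbb{N}_0$, $d_i(n)=2^{i-1}-\left|(n\bmod 2^i)-2^{i-1}\right|$. *)

From mathcomp Require Import all_boot.
(* d_i(n) = 2^(i-1) - | (n mod 2^i) - 2^(i-1) |, computed in nat.
   The absolute difference |r - h| of naturals is (r - h) + (h - r)
   (truncated subtractions); the result is always <= 2^(i-1), so the
   outer truncated subtraction is exact. *)
Definition d (i n : nat) : nat :=
  let r := n %% 2 ^ i in
  let h := 2 ^ i.-1 in
  h - ((r - h) + (h - r)).

From mathcomp Require Import all_boot zify.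

(* d_k(m) is the distance from m to the nearest multiple of 2^k: a triangle
   wave with slopes +-1, satisfying d_k(m) + d_k(m+1) = d_(k+1)(2m+1).  If
   d_j(n+1) = d_i(n+1) or d_i(n) = d_j(n) this identity gives l = i+1 or j+1.
   Otherwise both waves step in the same direction at n with values two apart,
   so the nearest multiples of 2^i and 2^j on that side differ by 2; hence
   min(i,j) = 1, which pins the values down: the sum is 3 and n = 1 or 2
   (mod 4), so l = 3. *)


Lemma modn_dvd_congr {e f u v} : e %| f -> u = v %[mod f] -> u = v %[mod e].
Proof. by move=> ef uv; rewrite -(modn_dvdm u ef) uv modn_dvdm. Qed.

Lemma modnS_wrap N m : 0 < N ->
  m.+1 %% N = if (m %% N).+1 == N then 0 else (m %% N).+1.
Proof.
move=> N0; rewrite -addn1 -modnDml addn1.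
have := ltn_pmod m N0; case: eqP => [->|ne] h; first by rewrite modnn.
by rewrite modn_small //; lia.
Qed.

Lemma modn_mul2_add1 m N : 0 < N -> (2 * m + 1) %% (2 * N) = 2 * (m %% N) + 1.
Proof.
move=> N0; rewrite -modnDml -muln_modr modn_small //.
by have := ltn_pmod m N0; lia.
Qed.

Lemma dvdn_gap_expn {p a b x y g} :
  x = y %[mod p ^ a] -> x = y + g %[mod p ^ b] -> p ^ minn a b %| g.
Proof.
move=> /(modn_dvd_congr (dvdn_exp2l p (geq_minl a b))) xy.
move=> /(modn_dvd_congr (dvdn_exp2l p (geq_minr a b))).
rewrite xy -[y in y %% _]addn0 => /eqP; rewrite eqn_modDl mod0n => /eqP g0.
by rewrite /dvdn -g0.
Qed.

Lemma dE k m : d k m = minn (m %% 2 ^ k) (2 ^ k - m %% 2 ^ k).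
Proof.
case: k => [|k]; first by rewrite /d modn1.
have N0 : 0 < 2 ^ k.+1 by rewrite expn_gt0.
rewrite /d /=; have := ltn_pmod m N0; rewrite expnS; lia.
Qed.

Lemma d_le k m : d k m <= 2 ^ k.-1.
Proof. exact: leq_subr. Qed.

Lemma d_le1 k m : k <= 1 -> d k m <= 1.
Proof. by move=> k1; apply: leq_trans (d_le k m) _; case: k k1 => [|[]]. Qed.

Lemma dvdn4_expn_of_d_gt1 k m : 1 < d k m -> 4 %| 2 ^ k.
Proof.
move=> /leq_trans/(_ (d_le k m)); rewrite -[X in X <= _](expn1 2) leq_exp2l // => k2.
by rewrite (_ : 4 = 2 ^ 2) // dvdn_Pexp2l //; lia.
Qed.

Lemma d_succ k m : 0 < k -> d k m.+1 = d k m + 1 \/ d k m = d k m.+1 + 1.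
Proof.
case: k => // k _; have N0 : 0 < 2 ^ k.+1 by rewrite expn_gt0.
rewrite !dE modnS_wrap //; have := ltn_pmod m N0; rewrite expnS; case: eqP; lia.
Qed.

Lemma d_add_succ k m : 0 < k -> d k m + d k m.+1 = d k.+1 (2 * m + 1).
Proof.
case: k => // k _; have N0 : 0 < 2 ^ k.+1 by rewrite expn_gt0.
rewrite !dE modnS_wrap // [2 ^ k.+2]expnS modn_mul2_add1 //.
have := ltn_pmod m N0; rewrite expnS; case: eqP; lia.
Qed.

Lemma d_up_mod {k m} : d k m.+1 = d k m + 1 -> m = d k m %[mod 2 ^ k].
Proof.
have N0 : 0 < 2 ^ k by rewrite expn_gt0.
move=> U; suff -> : d k m = m %% 2 ^ k by rewrite modn_mod.
move: U; rewrite !dE modnS_wrap //; have := ltn_pmod m N0; case: eqP; lia.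
Qed.

Lemma d_down_mod {k m} : d k m = d k m.+1 + 1 -> m.+1 + d k m.+1 = 0 %[mod 2 ^ k].
Proof.
have N0 : 0 < 2 ^ k by rewrite expn_gt0.
move=> D; have : m.+1 %% 2 ^ k + d k m.+1 = 0 \/ m.+1 %% 2 ^ k + d k m.+1 = 2 ^ k.
  move: D; rewrite !dE [m.+1 %% _]modnS_wrap //.
  have := ltn_pmod m N0; case: eqP; lia.
by rewrite -modnDml mod0n; case=> ->; rewrite ?mod0n ?modnn.
Qed.

Lemma d3_mul2_add1 n : n %% 4 = 1 \/ n %% 4 = 2 -> d 3 (2 * n + 1) = 3.
Proof. by rewrite dE (_ : 2 ^ 3 = 2 * 4) // modn_mul2_add1 //; case=> ->. Qed.

Lemma d_add_down_pair i j n :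
  d i n = d i n.+1 + 1 -> d j n = d j n.+1 + 1 -> d j n.+1 = d i n.+1 + 2 ->
  d j n.+1 + d i n = d 3 (2 * n + 1).
Proof.
move=> Di Dj Eji; have Ci := d_down_mod Di; have Cj := d_down_mod Dj.
have : 2 ^ minn i j %| 2 ^ 1.
  by apply: (dvdn_gap_expn (esym Ci)); rewrite -addnA -Eji; apply: esym.
rewrite dvdn_Pexp2l // geq_min => /orP [i1|j1]; last first.
  by have := d_le1 j n.+1 j1; lia.
have := d_le1 i n i1 => di1.
have Dj2 : d j n.+1 = 2 by lia.
have dvd4 : 4 %| 2 ^ j by apply: (dvdn4_expn_of_d_gt1 _ n.+1); lia.
have := modn_dvd_congr dvd4 Cj; rewrite Dj2 => Cj4.
rewrite d3_mul2_add1; lia.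
Qed.

Lemma d_add_up_pair i j n :
  d j n.+1 = d j n + 1 -> d i n.+1 = d i n + 1 -> d i n = d j n + 2 ->
  d j n.+1 + d i n = d 3 (2 * n + 1).
Proof.
move=> Uj Ui Eij; have Cj := d_up_mod Uj; have Ci := d_up_mod Ui.
have : 2 ^ minn j i %| 2 ^ 1 by apply: (dvdn_gap_expn Cj); rewrite -Eij.
rewrite dvdn_Pexp2l // geq_min => /orP [j1|i1]; last first.
  by have := d_le1 i n i1; lia.
have := d_le1 j n.+1 j1 => dj1.
have Di2 : d i n = 2 by lia.
have dvd4 : 4 %| 2 ^ i by apply: (dvdn4_expn_of_d_gt1 _ n); lia.
have := modn_dvd_congr dvd4 Ci; rewrite Di2 => Ci4.
rewrite d3_mul2_add1; lia.
Qed.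

Theorem lemma12 (i j n : nat) :
  0 < i -> 0 < j ->
  (d j n.+1 = d i n + 1 \/ d j n.+1 + 1 = d i n) ->
  exists l : nat, (l = 3 \/ l = i.+1 \/ l = j.+1) /\
    d j n.+1 + d i n = d l (2 * n + 1).
Proof.
move=> i0 j0 H.
have [Eji|Eji] := eqVneq (d j n.+1) (d i n.+1).
  by exists i.+1; split; [right; left | rewrite Eji addnC d_add_succ].
have [Eij|Eij] := eqVneq (d i n) (d j n).
  by exists j.+1; split; [right; right | rewrite Eij addnC d_add_succ].
exists 3; split; first by left.
have Si := d_succ i n i0; have Sj := d_succ j n j0.
have [[Di [Dj E]]|[Uj [Ui E]]] :
    (d i n = d i n.+1 + 1 /\ d j n = d j n.+1 + 1 /\ d j n.+1 = d i n.+1 + 2) \/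
    (d j n.+1 = d j n + 1 /\ d i n.+1 = d i n + 1 /\ d i n = d j n + 2).
  by lia.
- exact: d_add_down_pair Di Dj E.
- exact: d_add_up_pair Uj Ui E.
Qed.
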